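(* Let $(S,\mu)$ be a complete, $\sigma$-finite positive measure space and let $X$ be a Banach space whose norm is Fréchet differentiable. A non-zero $f\in L^1(\mu,X)$ is approximately smooth if and only if $f(s)\neq 0$ for $\mu$-almost every $s\in S$.
   Context: $L^1(\mu,X)$ is the Lebesgue–Bochner space of (classes of a.e. equal) strongly measurable $f:S\to X$ with $\|f\|=\int_S\|f(s)\|\,d\mu(s)<\infty$. For a non-zero $x$ in a normed space $Y$, $J(x)$ denotes the set of support functionals at $x$, i.e. norm-one $F\in Y^*$ with $F(x)=\|x\|$; $x$ is approximately smooth if $\operatorname{diam}J(x)=\sup\{\|F-G\|:F,G\in J(x)\}<2$. The norm of $X$ is Fréchet differentiable if for every non-zero $x\in X$ there is $\varphi\in X^*$ with $\lim_{h\to0}\big|\|x+h\|-\|x\|-\varphi(h)\big|/\|h\|=0$. *)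

From HB Require Import structures.
From mathcomp Require Import all_boot all_order all_algebra.
From mathcomp Require Import all_classical all_reals all_analysis.
Set Implicit Arguments. Unset Strict Implicit. Unset Printing Implicit Defensive.
Import Order.TTheory GRing.Theory Num.Theory.
Import numFieldNormedType.Exports.
Local Open Scope classical_set_scope.
Local Open Scope ring_scope.

Section BochnerL1.
Context (d : measure_display) (T : measurableType d) (R : realType)
  (X : normedModType R) (mu : {measure set T -> \bar R}).

Definition simple_fun (g : T -> X) : Prop :=
  finite_set (range g) /\ forall y : X, measurable (g @^-1` [set y]).

Definition strongly_measurable (f : T -> X) : Prop :=
  exists g : nat -> T -> X, (forall n, simple_fun (g n)) /\
    {ae mu, forall s, (fun n => g n s) @ \oo --> f s}.

Definition L1norm (f : T -> X) : \bar R := (\int[mu]_s (`|f s|)%:E)%E.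

Definition bochner_L1 (f : T -> X) : Prop :=
  strongly_measurable f /\ (L1norm f < +oo)%E.

Definition L1_linear (F : (T -> X) -> R) : Prop :=
  forall (a : R) (f g : T -> X), bochner_L1 f -> bochner_L1 g ->
    F (fun s => a *: f s + g s) = a * F f + F g.

Definition L1_dual_norm (F : (T -> X) -> R) : \bar R :=
  ereal_sup [set (`|F g|)%:E | g in [set g | bochner_L1 g /\ (L1norm g <= 1)%E]].

Definition L1_dual (F : (T -> X) -> R) : Prop :=
  L1_linear F /\ (L1_dual_norm F < +oo)%E.

Definition support_functionals (f : T -> X) : set ((T -> X) -> R) :=
  [set F | L1_dual F /\ L1_dual_norm F = 1%E /\ (F f)%:E = L1norm f].

Definition diam_support (f : T -> X) : \bar R :=
  ereal_sup [set r | exists F G, support_functionals f F /\ support_functionals f G /\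
                                  r = L1_dual_norm (fun g => F g - G g)].

Definition approximately_smooth (f : T -> X) : Prop :=
  (diam_support f < 2%:E)%E.

End BochnerL1.

Definition frechet_differentiable_norm (R : realType) (X : normedModType R) : Prop :=
  forall x : X, x != 0 -> differentiable (fun y : X => `|y| : R) x.

From HB Require Import structures.
From mathcomp Require Import all_boot all_order all_algebra.
From mathcomp Require Import all_classical all_reals all_analysis.
From mathcomp Require Import measurable_realfun lra.
Import Order.TTheory GRing.Theory Num.Theory.
Import numFieldNormedType.Exports.
Local Open Scope classical_set_scope.
Local Open Scope ring_scope.

(* If f <> 0 almost everywhere, two support functionals F, G at f satisfy
   F g - G g <= int_S k (|f + g/k| - |f|) + k (|f - g/k| - |f|) for all k > 0,
   and since the norm of X is differentiable at every f s, dominated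
   convergence sends the right-hand side to 0: J(f) is a singleton.
   Conversely, if f = 0 on a non-negligible set, sigma-finiteness gives a set B
   in it with 0 < mu B < oo.  With phi the derivative of the norm at a non-zero
   value of f, the functionals g |-> int_{f <> 0} D|.|(f s) (g s) +/- int_{f = 0}
   phi (g s) both lie in J(f), and they differ by 2 on the normalized indicator
   of B times a unit vector u with phi u = 1. *)

Set Implicit Arguments.
Unset Strict Implicit.

Section SimpleFunctions.
Context (d : measure_display) (T : measurableType d) (R : realType)
  (X : normedModType R).

Lemma preimage_finite_range_measurable (Y : Type) (w : T -> Y) :
  finite_set (range w) -> (forall y, measurable (w @^-1` [set y])) ->
  forall B, measurable (w @^-1` B).
Proof.
move=> fw mw B.
have -> : w @^-1` B = \bigcup_(y in range w `&` B) w @^-1` [set y].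
  apply/seteqP; split => [s Bs|s [y [[s' _ <-] _] /= ->]] //.
  by exists (w s) => //; split => //; exists s.
by apply: fin_bigcup_measurable => //; exact: sub_finite_set fw.
Qed.

Lemma simple_fun_pair (u v : T -> X) : simple_fun u -> simple_fun v ->
  finite_set (range (fun s => (u s, v s))) /\
  forall p, measurable ((fun s => (u s, v s)) @^-1` [set p]).
Proof.
move=> [fu mu] [fv mv]; split.
  apply: sub_finite_set (finite_setX fu fv).
  by move=> p [s _ <-]; split; exists s.
move=> [a b].
have -> : (fun s => (u s, v s)) @^-1` [set (a, b)] =
          u @^-1` [set a] `&` v @^-1` [set b].
  by apply/seteqP; split => s /=; case=> -> ->.
exact: measurableI.
Qed.

Lemma simple_fun_lincomb (a : R) (u v : T -> X) : simple_fun u -> simple_fun v ->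
  simple_fun (fun s => a *: u s + v s).
Proof.
move=> su sv; have [fp mp] := simple_fun_pair su sv; split.
  apply: sub_finite_set (finite_image (fun p : X * X => a *: p.1 + p.2) fp).
  by move=> y [s _ <-]; exists (u s, v s) => //; exists s.
move=> y.
have -> : (fun s => a *: u s + v s) @^-1` [set y] =
  (fun s => (u s, v s)) @^-1` [set p | a *: p.1 + p.2 = y] by [].
exact: preimage_finite_range_measurable.
Qed.

Lemma simple_fun_cst (c : X) : simple_fun (fun _ : T => c).
Proof.
split; first by apply: sub_finite_set (finite_set1 c) => y [s _ <-].
move=> y; rewrite (_ : (fun _ => c) @^-1` [set y] = cst c @^-1` [set y]) //.
by rewrite preimage_cst; case: ifP.
Qed.

End SimpleFunctions.

Section StronglyMeasurable.
Context (d : measure_display) (T : measurableType d) (R : realType)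
  (X : normedModType R) (mu : {measure set T -> \bar R}).

Lemma strongly_measurable_lincomb (a : R) (u v : T -> X) :
  strongly_measurable mu u -> strongly_measurable mu v ->
  strongly_measurable mu (fun s => a *: u s + v s).
Proof.
move=> [gu [sgu aeu]] [gv [sgv aev]].
exists (fun n s => a *: gu n s + gv n s); split.
  by move=> n; apply: simple_fun_lincomb.
by apply: filterS2 aeu aev => s hu hv; apply: cvgD => //; exact: cvgZl_tmp.
Qed.

Lemma strongly_measurable_cst (c : X) : strongly_measurable mu (fun _ => c).
Proof.
exists (fun _ _ => c); split; first by move=> n; exact: simple_fun_cst.
by apply: aeW => s; exact: cvg_cst.
Qed.

Lemma L1norm_neq0_exists_nonzero (h : T -> X) :
  L1norm mu h <> 0%E -> exists s, h s != 0.
Proof.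
move=> h_neq0; apply: contrapT => /forallNP h0; apply: h_neq0.
rewrite /L1norm (eq_integral (cst 0%E)) ?integral0 // => s _.
by move/negP: (h0 s); rewrite negbK => /eqP ->; rewrite normr0.
Qed.

Hypothesis mu_complete : measure_is_complete mu.

(* The simple approximants converge only off a null set N; completeness makes
   any function measurable on N. *)
Lemma measurable_fun_seqcont2 (Phi : X -> X -> R) (u v : T -> X) :
  (forall (a b : nat -> X) x y, a @ \oo --> x -> b @ \oo --> y ->
     (fun n => Phi (a n) (b n)) @ \oo --> Phi x y) ->
  strongly_measurable mu u -> strongly_measurable mu v ->
  measurable_fun setT (fun s => Phi (u s) (v s)).
Proof.
move=> Phi_cont [gu [sgu aeu]] [gv [sgv aev]].
have [N [mN N0 sN]] : {ae mu, forall s,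
    (gu^~ s @ \oo --> u s) /\ (gv^~ s @ \oo --> v s)}.
  exact: filterS2 aeu aev.
rewrite -(setUv N) setUC; apply/measurable_funU => //; first exact: measurableC.
split.
  apply: (@measurable_fun_cvg _ _ _ _
    (fun n s => Phi (gu n s) (gv n s))).
    move=> n _ B mB; apply: measurableI; first exact: measurableC.
    have [fp mp] := simple_fun_pair (sgu n) (sgv n).
    have -> : (fun s => Phi (gu n s) (gv n s)) @^-1` B =
      (fun s => (gu n s, gv n s)) @^-1` [set p | B (Phi p.1 p.2)] by [].
    exact: preimage_finite_range_measurable.
  move=> s /= Ns.
  have [] : (gu^~ s @ \oo --> u s) /\ (gv^~ s @ \oo --> v s).
    by apply: contra_notP Ns => /sN.
  exact: Phi_cont.
move=> _ B mB; apply: mu_complete.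
apply: (@negligibleS _ _ _ mu N); first by move=> s [].
by exists N; split.
Qed.

Lemma measurable_fun_norm_lincomb (a : R) (u v : T -> X) :
  strongly_measurable mu u -> strongly_measurable mu v ->
  measurable_fun setT (fun s => `|a *: u s + v s|).
Proof.
apply: (@measurable_fun_seqcont2 (fun x y => `|a *: x + y|)).
by move=> p q x y hp hq; apply: cvg_norm; apply: cvgD => //; exact: cvgZl_tmp.
Qed.

Lemma measurable_fun_norm (u : T -> X) : strongly_measurable mu u ->
  measurable_fun setT (fun s => `|u s|).
Proof.
move=> su; apply: (@measurable_fun_seqcont2 (fun x _ => `|x|) u u) => //.
by move=> p q x y hp _; apply: cvg_norm.
Qed.

Lemma measurable_zero_set (u : T -> X) : strongly_measurable mu u ->
  measurable [set s | u s = 0].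
Proof.
move=> su; have := measurable_fun_norm su measurableT (measurable_set1 (0 : R)).
rewrite setTI; congr measurable; apply/seteqP; split => s /=.
  by move/eqP; rewrite normr_eq0 => /eqP.
by move=> ->; rewrite normr0.
Qed.

Lemma integrable_norm (h : T -> X) : bochner_L1 mu h ->
  mu.-integrable setT (EFin \o (fun s => `|h s|)).
Proof.
move=> [sh hfin]; apply/integrableP; split.
  by apply/measurable_EFinP; exact: measurable_fun_norm.
by rewrite (eq_integral (fun s => (`|h s|)%:E)) // => s _; rewrite /= normr_id.
Qed.

Lemma L1norm_ge0 (h : T -> X) : (0 <= L1norm mu h)%E.
Proof. by apply: integral_ge0 => s _; rewrite lee_fin. Qed.

Lemma L1norm_fin_num (h : T -> X) : bochner_L1 mu h -> L1norm mu h \is a fin_num.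
Proof. by move=> [_ hf]; rewrite ge0_fin_numE // L1norm_ge0. Qed.

Lemma L1normE (h : T -> X) : bochner_L1 mu h ->
  L1norm mu h = (\int[mu]_s `|h s|)%:E.
Proof. by move=> hL; rewrite /Rintegral fineK // L1norm_fin_num. Qed.

Lemma bochner_L1_lincomb (a : R) (u v : T -> X) : bochner_L1 mu u ->
  bochner_L1 mu v -> bochner_L1 mu (fun s => a *: u s + v s).
Proof.
move=> [su uf] [sv vf]; split; first exact: strongly_measurable_lincomb.
have mnu : measurable_fun setT (EFin \o (fun s => `|u s|)).
  by apply/measurable_EFinP; exact: measurable_fun_norm.
have mnv : measurable_fun setT (EFin \o (fun s => `|v s|)).
  by apply/measurable_EFinP; exact: measurable_fun_norm.
have mau : measurable_fun setT (fun s => (`|a|%:E * (`|u s|)%:E)%E).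
  by apply: emeasurable_funM => //; exact: measurable_cst.
apply: le_lt_trans (@ge0_le_integral _ _ _ mu setT measurableT _
  (fun s => (`|a|%:E * (`|u s|)%:E + (`|v s|)%:E)%E) _ _ _ _) _.
- by move=> s _; rewrite lee_fin.
- by apply/measurable_EFinP; exact: measurable_fun_norm_lincomb.
- exact: emeasurable_funD.
- move=> s _; rewrite -EFinM -EFinD lee_fin.
  by rewrite (le_trans (ler_normD _ _)) // normrZ.
rewrite ge0_integralD // ge0_integralZl_EFin //.
by apply: lte_add_pinfty => //; apply: lte_mul_pinfty.
Qed.

Lemma bochner_L1_0 : bochner_L1 mu (fun _ => (0 : X)).
Proof.
split; first exact: strongly_measurable_cst.
rewrite /L1norm (eq_integral (cst 0%E)) ?integral0 // => s _.
by rewrite normr0.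
Qed.

Lemma L1norm_scale (c : R) (h : T -> X) : strongly_measurable mu h ->
  L1norm mu (fun s => c *: h s + 0) = (`|c|%:E * L1norm mu h)%E.
Proof.
move=> sh; rewrite /L1norm -ge0_integralZl_EFin //.
- by apply: eq_integral => s _; rewrite addr0 normrZ EFinM.
- by apply/measurable_EFinP; exact: measurable_fun_norm.
Qed.

Lemma L1_linear_scale (F : (T -> X) -> R) (h : T -> X) (c : R) :
  L1_linear mu F -> bochner_L1 mu h -> F (fun s => c *: h s + 0) = c * F h.
Proof.
move=> Flin hL.
have F0 : F (fun _ => 0) = 0.
  have := Flin 1 _ _ bochner_L1_0 bochner_L1_0.
  rewrite (_ : (fun s => 1 *: (0 : X) + 0) = fun _ => 0); last first.
    by apply: funext => s; rewrite scaler0 addr0.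
  by rewrite mul1r => /(congr1 (fun x => x - F (fun _ => 0))); rewrite subrr addrK.
by rewrite Flin // ?F0 ?addr0 //; exact: bochner_L1_0.
Qed.

(* Testing F on c h for every c >= 0 with c |h| <= 1 rules out |F h| > |h|,
   including the degenerate case |h| = 0. *)
Lemma L1_dual_contraction (F : (T -> X) -> R) (h : T -> X) : L1_dual mu F ->
  (L1_dual_norm mu F <= 1)%E -> bochner_L1 mu h -> `|F h| <= fine (L1norm mu h).
Proof.
move=> [Flin _] F1 hL.
have r0 : 0 <= fine (L1norm mu h) by rewrite fine_ge0 // L1norm_ge0.
have ub c : 0 <= c -> c * fine (L1norm mu h) <= 1 -> c * `|F h| <= 1.
  move=> c0 cr; have chL := bochner_L1_lincomb c hL bochner_L1_0.
  have : ((`|F (fun s => c *: h s + 0)|)%:E <= 1)%E.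
    apply: le_trans F1; apply: ereal_sup_ubound.
    exists (fun s => c *: h s + 0) => //; split => //.
    rewrite L1norm_scale; last by case: hL.
    by rewrite -(fineK (L1norm_fin_num hL)) -EFinM lee_fin ger0_norm.
  by rewrite L1_linear_scale // normrM ger0_norm // lee_fin.
rewrite leNgt; apply/negP => hlt.
set r := fine (L1norm mu h) in r0 hlt ub *; set a := `|F h| in hlt ub *.
have pos : 0 < r + a by lra.
have c0 : 0 <= 2 / (r + a) by rewrite divr_ge0 ?ltW.
have := ub _ c0.
rewrite mulrAC ler_pdivrMr // mul1r mulrAC ler_pdivrMr // mul1r.
by move=> /(_ ltac:(lra)); lra.
Qed.

End StronglyMeasurable.

Section NormDerivative.
Context (R : realType) (X : normedModType R).
Local Notation nrm := (fun y : X => `|y| : R).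

Lemma cvg_dnbhs0 (u : nat -> R) :
  u @ \oo --> 0 -> (forall n, u n != 0) -> u @ \oo --> 0^'.
Proof.
move=> u0 un A HA.
have uA : \forall n \near \oo, u n != 0 -> A (u n) by exact: u0 _ HA.
by apply: filterS uA => n; apply; exact: un.
Qed.

Lemma norm_diff_quotient_cvg (x v : X) : differentiable nrm x ->
  (fun n : nat => n.+1%:R * (`|n.+1%:R^-1 *: v + x| - `|x|)) @ \oo --> 'd nrm x v.
Proof.
move=> dx; have dv := @diff_derivable _ _ _ _ _ v dx.
rewrite -deriveE //.
have := cvg_comp _ _ (cvg_dnbhs0 (@cvg_harmonic R)
  (fun n => lt0r_neq0 (harmonic_gt0 n))) dv.
apply: cvg_trans; apply: near_eq_cvg; near=> n => /=.
by rewrite invrK.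
Unshelve. all: by end_near.
Qed.

Lemma norm_diff_quotient_bound (k : R) (x v : X) : 0 < k ->
  `|k * (`|k^-1 *: v + x| - `|x|)| <= `|v|.
Proof.
move=> k0; rewrite normrM gtr0_norm //.
have := ler_dist_dist (k^-1 *: v + x) x.
rewrite addrK normrZ gtr0_norm ?invr_gt0 // => h.
by rewrite (le_trans (ler_wpM2l (ltW k0) h)) // mulrA mulfV ?gt_eqF // mul1r.
Qed.

Lemma diff_norm_le (x v : X) : differentiable nrm x -> `|'d nrm x v| <= `|v|.
Proof.
move=> dx; pose proof cvg_norm (norm_diff_quotient_cvg (v := v) dx) as H.
rewrite -(cvg_lim _ H) //; apply: limr_le; first by apply/cvg_ex; exists `|'d nrm x v|.
by apply: nearW => n; exact: norm_diff_quotient_bound.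
Qed.

Lemma diff_norm_self (x : X) : differentiable nrm x -> 'd nrm x x = `|x|.
Proof.
move=> dx; have := norm_diff_quotient_cvg (v := x) dx.
have -> : (fun n : nat => n.+1%:R * (`|n.+1%:R^-1 *: x + x| - `|x|)) = cst `|x|.
  apply: funext => n /=.
  rewrite -{2}(scale1r x) -scalerDl normrZ ger0_norm;
    last by rewrite addr_ge0 // invr_ge0.
  by rewrite mulrDl mul1r addrK mulrA mulfV // mul1r.
by move=> H; exact: cvg_unique _ H (cvg_cst _).
Qed.

Definition sym_diff_quotient (k : R) (x v : X) : R :=
  k * (`|k^-1 *: v + x| - `|x|) + k * (`|- k^-1 *: v + x| - `|x|).

Lemma sym_diff_quotient_bound (k : R) (x v : X) : 0 < k ->
  `|sym_diff_quotient k x v| <= 2 * `|v|.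
Proof.
move=> k0; apply: le_trans (ler_normD _ _) _.
rewrite mulr2n mulrDl mul1r scaleNr -scalerN; apply: lerD.
  exact: norm_diff_quotient_bound.
by rewrite -(normrN v); exact: norm_diff_quotient_bound.
Qed.

Lemma sym_diff_quotient_cvg0 (x v : X) : differentiable nrm x ->
  (fun n : nat => sym_diff_quotient n.+1%:R x v) @ \oo --> 0.
Proof.
move=> dx; have -> : (0 : R) = 'd nrm x v + 'd nrm x (- v) by rewrite linearN subrr.
under eq_fun do rewrite /sym_diff_quotient scaleNr -scalerN.
by apply: cvgD; exact: norm_diff_quotient_cvg.
Qed.

End NormDerivative.

Section RealIntegrable.
Context (d : measure_display) (T : measurableType d) (R : realType)
  (mu : {measure set T -> \bar R}).

Lemma integrable_EFinB (u v : T -> R) : mu.-integrable setT (EFin \o u) ->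
  mu.-integrable setT (EFin \o v) -> mu.-integrable setT (EFin \o (u \- v)).
Proof. by move=> iu iv; apply: eq_integrable (integrableB measurableT iu iv). Qed.

Lemma integrable_EFinD (u v : T -> R) : mu.-integrable setT (EFin \o u) ->
  mu.-integrable setT (EFin \o v) -> mu.-integrable setT (EFin \o (u \+ v)).
Proof. by move=> iu iv; apply: eq_integrable (integrableD measurableT iu iv). Qed.

Lemma integrable_EFinZ (k : R) (u : T -> R) : mu.-integrable setT (EFin \o u) ->
  mu.-integrable setT (EFin \o (fun s => k * u s)).
Proof. by move=> iu; apply: eq_integrable (integrableZl measurableT k iu). Qed.

End RealIntegrable.

Section SupportFunctionalUnique.
Context (d : measure_display) (T : measurableType d) (R : realType)
  (X : normedModType R) (mu : {measure set T -> \bar R})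
  (mu_complete : measure_is_complete mu)
  (f : T -> X) (fL : bochner_L1 mu f).

Let sdq (n : nat) (g : T -> X) (s : T) := sym_diff_quotient n.+1%:R (f s) (g s).

Lemma integrable_norm_diff_quotient (k c : R) g : bochner_L1 mu g ->
  mu.-integrable setT (EFin \o (fun s => k * (`|c *: g s + f s| - `|f s|))).
Proof.
move=> gL; apply: integrable_EFinZ; apply: integrable_EFinB;
  apply: integrable_norm => //; exact: bochner_L1_lincomb.
Qed.

Lemma integrable_sym_diff_quotient n g : bochner_L1 mu g ->
  mu.-integrable setT (EFin \o sdq n g).
Proof.
by move=> gL; apply: integrable_EFinD; exact: integrable_norm_diff_quotient.
Qed.

Lemma support_functional_diff_le F G g n : support_functionals mu f F ->
  support_functionals mu f G -> bochner_L1 mu g ->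
  F g - G g <= \int[mu]_s sdq n g s.
Proof.
move=> [FD [F1 Ff]] [GD [G1 Gf]] gL.
pose k : R := n.+1%:R; have k0 : 0 < k by [].
have iNf := integrable_norm mu_complete fL.
have iN c := integrable_norm mu_complete (bochner_L1_lincomb mu_complete c gL fL).
have norm_ge H c : L1_dual mu H -> L1_dual_norm mu H = 1%E ->
    (H f)%:E = L1norm mu f ->
    c * H g + \int[mu]_s `|f s| <= \int[mu]_s `|c *: g s + f s|.
  move=> HD H1 Hf.
  have -> : \int[mu]_s `|f s| = H f by rewrite -[RHS]/(fine (H f)%:E) Hf.
  rewrite -(HD.1 _ _ _ gL fL); apply: le_trans (ler_norm _) _.
  have := L1_dual_contraction mu_complete HD _ (bochner_L1_lincomb mu_complete c gL fL).
  by rewrite H1 => /(_ (lexx _)).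
have := norm_ge F k^-1 FD F1 Ff; have := norm_ge G (- k^-1) GD G1 Gf.
rewrite /sdq /sym_diff_quotient -/k RintegralD //;
  try exact: integrable_norm_diff_quotient.
rewrite !RintegralZl ?RintegralB //; try exact: integrable_EFinB.
set A := \int[mu]_s `|k^-1 *: g s + f s|; set B := \int[mu]_s `|- k^-1 *: g s + f s|.
set C := \int[mu]_s `|f s| => hB hA.
rewrite -mulrDr -[X in X <= _]mul1r -(mulfV (lt0r_neq0 k0)) -mulrA ler_pM2l //.
rewrite mulrBr; move: hA hB; rewrite mulNr.
by move: (k^-1 * F g) (k^-1 * G g) => x y; clearbody A B C; lra.
Qed.

Hypothesis X_frechet : frechet_differentiable_norm X.
Hypothesis f_ae_nonzero : {ae mu, forall s, f s != 0}.

Lemma integral_sym_diff_quotient_cvg0 g : bochner_L1 mu g ->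
  (fun n => (\int[mu]_s sdq n g s)%:E) @ \oo --> 0%E.
Proof.
move=> gL.
have msdq n : measurable_fun setT (EFin \o sdq n g).
  exact: measurable_int (integrable_sym_diff_quotient n gL).
have i2g : mu.-integrable setT (fun s => (2 * `|g s|)%:E).
  exact: eq_integrable (integrableZl measurableT 2 (integrable_norm mu_complete gL)).
have sdq_cvg : {ae mu, forall s, setT s ->
    (fun n => (sdq n g s)%:E) @ \oo --> (cst 0%E s : \bar R)}.
  apply: filterS f_ae_nonzero => s fs0 _; apply: cvg_EFin; first exact: nearW.
  exact: sym_diff_quotient_cvg0 (X_frechet fs0).
have sdq_dom : {ae mu, forall s n, setT s -> (`|(sdq n g s)%:E| <= (2 * `|g s|)%:E)%E}.
  by apply: aeW => s n _; rewrite lee_fin; exact: sym_diff_quotient_bound.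
have [_ _] := dominated_convergence measurableT msdq (measurable_cst _)
  sdq_cvg i2g sdq_dom.
rewrite integral0; apply: cvg_trans; apply: near_eq_cvg; apply: nearW => n /=.
by rewrite /Rintegral fineK // (integrable_fin_num measurableT
  (integrable_sym_diff_quotient n gL)).
Qed.

Lemma support_functional_le F G g : support_functionals mu f F ->
  support_functionals mu f G -> bochner_L1 mu g -> F g <= G g.
Proof.
move=> JF JG gL; rewrite -subr_le0 -lee_fin.
suff : ((F g - G g)%:E <= 0)%E by [].
have H := integral_sym_diff_quotient_cvg0 gL.
rewrite -(cvg_lim _ H) //; apply: lime_ge; first exact: cvgP H.
by apply: nearW => n; rewrite lee_fin; exact: support_functional_diff_le.
Qed.

Lemma approximately_smooth_ae_nonzero : approximately_smooth mu f.
Proof.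
apply: (@le_lt_trans _ _ 0%E); last by rewrite lte_fin.
apply: ge_ereal_sup => _ [F [G [JF [JG ->]]]].
apply: ge_ereal_sup => _ [g [gL _] <-].
suff -> : F g - G g = 0 by rewrite normr0.
by apply/eqP; rewrite subr_eq0 eq_le !support_functional_le.
Qed.

End SupportFunctionalUnique.

Lemma measurable_set_prop (d : measure_display) (T : measurableType d) (P : Prop) :
  measurable [set _ : T | P].
Proof.
have [p|np] := pselect P.
  by rewrite (_ : [set _ | P] = setT) //; apply/seteqP; split.
by rewrite (_ : [set _ | P] = set0) //; apply/seteqP; split.
Qed.

Section DensityFunctionals.
Context (d : measure_display) (T : measurableType d) (R : realType)
  (X : normedModType R) (mu : {measure set T -> \bar R})
  (mu_complete : measure_is_complete mu)
  (X_frechet : frechet_differentiable_norm X)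
  (f : T -> X) (fL : bochner_L1 mu f) (s0 : T) (fs0 : f s0 != 0).
Local Notation nrm := (fun y : X => `|y| : R).

(* Where f vanishes, any functional of norm <= 1 may be used; we take
   sg times the derivative of the norm at the fixed non-zero value f s0. *)
Definition support_density (sg : R) (s : T) (v : X) : R :=
  if f s == 0 then sg * 'd nrm (f s0) v else 'd nrm (f s) v.

Lemma support_density_lincomb sg s a v w :
  support_density sg s (a *: v + w) =
  a * support_density sg s v + support_density sg s w.
Proof.
by rewrite /support_density; case: ifP => _; rewrite linearD linearZ //= mulrDr mulrCA.
Qed.

Lemma support_density_bound sg s v : `|sg| <= 1 -> `|support_density sg s v| <= `|v|.
Proof.
move=> sg1; rewrite /support_density; case: ifPn => [_|fs]; last first.
  exact: diff_norm_le (X_frechet fs).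
rewrite normrM; apply: le_trans (ler_wpM2r (normr_ge0 _) sg1) _.
by rewrite mul1r; exact: diff_norm_le (X_frechet fs0).
Qed.

Lemma support_density_self sg s : support_density sg s (f s) = `|f s|.
Proof.
rewrite /support_density; case: eqP => [->|/eqP fs].
  by rewrite linear0 mulr0 normr0.
exact: diff_norm_self (X_frechet fs).
Qed.

Lemma support_density0 sg s : support_density sg s 0 = 0.
Proof. by rewrite /support_density; case: ifP => _; rewrite linear0 ?mulr0. Qed.

(* Off the zero set of f, the density is a pointwise limit of difference
   quotients of norms of strongly measurable functions. *)
Lemma measurable_fun_support_density sg g : strongly_measurable mu g ->
  measurable_fun setT (fun s => support_density sg s (g s)).
Proof.
move=> sgm; have mZ := measurable_zero_set mu_complete fL.1.
rewrite -(setUv [set s | f s = 0]); apply/measurable_funU => //.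
  exact: measurableC.
split.
- apply: (@eq_measurable_fun _ _ _ _ _ (fun s => sg * 'd nrm (f s0) (g s))).
    by move=> s; rewrite inE /= => fs; rewrite /support_density fs eqxx.
  apply: measurable_funM; first exact: measurable_cst.
  apply: measurable_funS measurableT (@subsetT _ _) _.
  apply: (@measurable_fun_seqcont2 _ _ _ _ _ mu_complete
    (fun _ y => 'd nrm (f s0) y) g g) => //.
  move=> a b x y _ hb; apply: cvg_comp hb _.
  exact: (diff_continuous (X_frechet fs0)).
- apply: (@measurable_fun_cvg _ _ _ _
    (fun n s => n.+1%:R * (`|n.+1%:R^-1 *: g s + f s| - `|f s|))).
    move=> n; apply: measurable_funS measurableT (@subsetT _ _) _.
    apply: measurable_funM; first exact: measurable_cst.
    apply: measurable_funB.
      exact: (measurable_fun_norm_lincomb mu_complete _ sgm fL.1).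
    exact: (measurable_fun_norm mu_complete fL.1).
  move=> s /= /eqP fs; rewrite /support_density (negbTE fs).
  exact: norm_diff_quotient_cvg (X_frechet fs).
Qed.

Lemma integrable_support_density sg g : `|sg| <= 1 -> bochner_L1 mu g ->
  mu.-integrable setT (EFin \o (fun s => support_density sg s (g s))).
Proof.
move=> sg1 gL; apply: (le_integrable measurableT _ _ (integrable_norm mu_complete gL)).
  by apply/measurable_EFinP; exact: measurable_fun_support_density gL.1.
by move=> s _ /=; rewrite lee_fin normr_id; exact: support_density_bound.
Qed.

Definition density_functional (sg : R) (g : T -> X) : R :=
  \int[mu]_s support_density sg s (g s).

Lemma density_functional_linear sg : `|sg| <= 1 -> L1_linear mu (density_functional sg).
Proof.
move=> sg1 a g h gL hL; rewrite /density_functional.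
under eq_Rintegral do rewrite support_density_lincomb.
rewrite RintegralD //; last exact: integrable_support_density.
  by rewrite RintegralZl //; exact: integrable_support_density.
by apply: integrable_EFinZ; exact: integrable_support_density.
Qed.

Lemma density_functional_bound sg g : `|sg| <= 1 -> bochner_L1 mu g ->
  ((`|density_functional sg g|)%:E <= L1norm mu g)%E.
Proof.
move=> sg1 gL; rewrite /density_functional EFin_normr_Rintegral //;
  last exact: integrable_support_density.
have mp : measurable_fun setT (fun s => (support_density sg s (g s))%:E).
  by apply/measurable_EFinP; exact: measurable_fun_support_density gL.1.
apply: le_trans (le_abse_integral mu measurableT mp) _.
apply: ge0_le_integral => //.
- apply/measurable_EFinP; apply: measurableT_comp (@normr_measurable _ _) _.
  exact: measurable_fun_support_density gL.1.
- by apply/measurable_EFinP; exact: measurable_fun_norm gL.1.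
- by move=> s _ /=; rewrite lee_fin support_density_bound.
Qed.

Lemma density_functional_dual_norm_le1 sg : `|sg| <= 1 ->
  (L1_dual_norm mu (density_functional sg) <= 1)%E.
Proof.
move=> sg1; apply: ge_ereal_sup => _ [g [gL g1] <-].
exact: le_trans (density_functional_bound sg1 gL) g1.
Qed.

Lemma density_functional_self sg : (density_functional sg f)%:E = L1norm mu f.
Proof.
rewrite /density_functional (L1normE fL).
by under eq_Rintegral do rewrite support_density_self.
Qed.

Section Bump.
Variables (B : set T) (mB : measurable B) (B_zero : B `<=` [set s | f s = 0])
  (B_gt0 : (0 < mu B)%E) (B_lty : (mu B < +oo)%E).

Let u := `|f s0|^-1 *: f s0.

Let norm_u : `|u| = 1.
Proof.
by rewrite normrZ ger0_norm ?invr_ge0 // mulVf // normr_eq0.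
Qed.

Let diff_norm_u : 'd nrm (f s0) u = 1.
Proof.
by rewrite /u linearZ /= (diff_norm_self (X_frechet fs0)) [_ *: _]mulVf // normr_eq0.
Qed.

Let muB_gt0 : 0 < fine (mu B).
Proof. by apply: fine_gt0; rewrite B_gt0 B_lty. Qed.

Definition bump (s : T) : X := if s \in B then (fine (mu B))^-1 *: u else 0.

Lemma bump_simple : simple_fun bump.
Proof.
split.
  apply: (@sub_finite_set _ _ ([set (fine (mu B))^-1 *: u] `|` [set 0])).
    by move=> y [s _ <-]; rewrite /bump; case: ifP => _; [left|right].
  by rewrite finite_setU; split; exact: finite_set1.
move=> y.
have -> : bump @^-1` [set y] = (B `&` [set _ | (fine (mu B))^-1 *: u = y])
                             `|` (~` B `&` [set _ | (0 : X) = y]).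
  apply/seteqP; split => s /=; rewrite /bump.
    case: ifPn => [/set_mem Bs <-|/negP nBs <-]; [by left|right; split => //].
    by move=> Bs; apply: nBs; rewrite inE.
  case=> -[Bs <-]; case: ifPn => // h; first by move: h; rewrite mem_set.
  by move/set_mem: h.
apply: measurableU; apply: measurableI; try exact: measurable_set_prop.
  exact: mB.
exact: measurableC.
Qed.

Lemma integrable_indic_B : mu.-integrable setT (EFin \o \1_B).
Proof.
apply/integrableP; split; first by apply/measurable_EFinP; exact: measurable_indic.
rewrite (eq_integral (fun s => (\1_B s)%:E)) ?integral_indic ?setIT //.
by move=> s _ /=; rewrite ger0_norm.
Qed.

Lemma bump_normE s : `|bump s| = (fine (mu B))^-1 * \1_B s.
Proof.
rewrite /bump indicE; case: ifP => _; last by rewrite normr0 mulr0.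
by rewrite normrZ norm_u mulr1 ger0_norm ?invr_ge0 ?ltW // mulr1.
Qed.

Lemma bump_L1norm : L1norm mu bump = 1%E.
Proof.
rewrite /L1norm (eq_integral (fun s => ((fine (mu B))^-1%:E * (\1_B s)%:E)%E));
  last by move=> s _; rewrite bump_normE EFinM.
have c0 : 0 <= (fine (mu B))^-1 by rewrite invr_ge0 ltW.
rewrite ge0_integralZl_EFin //; last by apply/measurable_EFinP; exact: measurable_indic.
rewrite integral_indic // setIT -[mu B]fineK ?ge0_fin_numE //.
by rewrite -EFinM mulVf ?gt_eqF.
Qed.

Lemma bump_L1 : bochner_L1 mu bump.
Proof.
split; last by rewrite bump_L1norm ltry.
exists (fun _ => bump); split => [_|]; first exact: bump_simple.
by apply: aeW => s; exact: cvg_cst.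
Qed.

Lemma density_functional_bump sg : density_functional sg bump = sg.
Proof.
rewrite /density_functional.
transitivity (\int[mu]_s (sg * (fine (mu B))^-1 * \1_B s)).
  apply: eq_Rintegral => s _; rewrite /bump indicE; case: ifPn => [Bs|_].
    rewrite /support_density (B_zero (set_mem Bs)) eqxx linearZ /= diff_norm_u.
    by rewrite mulr1; congr (_ * _); exact: mulr1.
  by rewrite support_density0 mulr0.
rewrite RintegralZl //; last exact: integrable_indic_B.
by rewrite /Rintegral integral_indic // setIT -mulrA mulVf ?mulr1 ?gt_eqF.
Qed.

Lemma density_functional_support sg : `|sg| = 1 ->
  support_functionals mu f (density_functional sg).
Proof.
move=> sg1; have sg_le1 : `|sg| <= 1 by rewrite sg1.
split; first split; first exact: density_functional_linear.
  exact: le_lt_trans (density_functional_dual_norm_le1 sg_le1) (ltry _).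
split; last exact: density_functional_self.
apply/le_anti/andP; split; first exact: density_functional_dual_norm_le1.
apply: ereal_sup_ubound; exists bump; last by rewrite density_functional_bump sg1.
by split; [exact: bump_L1 | rewrite bump_L1norm].
Qed.

Lemma not_approximately_smooth_zero_on : ~ approximately_smooth mu f.
Proof.
apply/negP; rewrite -leNgt.
apply: le_ereal_sup_tmp.
exists (L1_dual_norm mu (fun g => density_functional 1 g - density_functional (-1) g)).
  exists (density_functional 1), (density_functional (-1)).
  split; first by apply: density_functional_support; rewrite normr1.
  by split => //; apply: density_functional_support; rewrite normrN normr1.
apply: le_ereal_sup_tmp.
exists (`|density_functional 1 bump - density_functional (-1) bump|%:E).
  by exists bump => //; split; [exact: bump_L1 | rewrite bump_L1norm].
by rewrite !density_functional_bump opprK lee_fin ger0_norm.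
Qed.

End Bump.
End DensityFunctionals.

Lemma sigma_finite_positive_finite_subset (d : measure_display) (T : measurableType d)
    (R : realType) (mu : {measure set T -> \bar R}) (A : set T) :
  sigma_finite setT mu -> measurable A -> ~ mu.-negligible A ->
  exists B, [/\ measurable B, B `<=` A, (0 < mu B)%E & (mu B < +oo)%E].
Proof.
move=> [F F_cover F_fin] mA A_nonnegl.
have [i Ai_neq0] : exists i, mu (A `&` F i) != 0%E.
  apply: contrapT => /forallNP Ai0; apply: A_nonnegl.
  apply: (@negligibleS _ _ _ mu (\bigcup_i (A `&` F i))).
    move=> s As; have : [set: T] s by [].
    by rewrite F_cover => -[j _ Fjs]; exists j.
  apply: negligible_bigcup => j; exists (A `&` F j).
  split => //; first exact: measurableI mA (F_fin j).1.
  by move/negP: (Ai0 j); rewrite negbK => /eqP.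
have mAi : measurable (A `&` F i) by exact: measurableI mA (F_fin i).1.
exists (A `&` F i); split => //; first by rewrite lt0e Ai_neq0 measure_ge0.
apply: le_lt_trans (F_fin i).2.
by apply: le_measure; rewrite ?inE //; exact: (F_fin i).1.
Qed.

Unset Implicit Arguments.
Set Strict Implicit.

Theorem corollary3p3 (d : measure_display) (T : measurableType d) (R : realType)
  (X : completeNormedModType R) (mu : {measure set T -> \bar R})
  (mu_complete : measure_is_complete mu)
  (mu_sigma_finite : sigma_finite setT mu)
  (X_frechet : frechet_differentiable_norm X)
  (f : T -> X) (f_L1 : bochner_L1 mu f) (f_nonzero : L1norm mu f <> 0%E) :
  approximately_smooth mu f <-> {ae mu, forall s, f s != 0}.
Proof.
split; last exact: (approximately_smooth_ae_nonzero mu_complete f_L1 X_frechet).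
move=> f_smooth; apply: contrapT => not_ae.
have [s0 fs0] := L1norm_neq0_exists_nonzero f_nonzero.
have mZ := measurable_zero_set mu_complete f_L1.1.
have [B [mB B_zero B_gt0 B_lty]] : exists B, [/\ measurable B,
    B `<=` [set s | f s = 0], (0 < mu B)%E & (mu B < +oo)%E].
  apply: sigma_finite_positive_finite_subset mu_sigma_finite mZ _ => Z_negl.
  by apply: not_ae; apply: negligibleS Z_negl => s /negP; rewrite negbK => /eqP.
exact: (not_approximately_smooth_zero_on mu_complete X_frechet f_L1 fs0
  mB B_zero B_gt0 B_lty f_smooth).
Qed.
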